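(* If $N$ is a probabilistic algorithmic knowledge structure in which agent $i$ uses a knowledge algorithm $\mathtt{A}_i$ that is $\phi$-complete and respects negation, then $N\models X_i\phi\Leftrightarrow\neg X_i\neg\phi$.
   Context: A derandomizer is $v=(v_1,\dots,v_n)$ with each $v_i$ a sequence of coin-toss outcomes; $V$ is the set of derandomizers. A probabilistic algorithmic knowledge structure is $N=(S,\pi,L_1,\dots,L_n,\mathtt{A}^d_1,\dots,\mathtt{A}^d_n,\nu)$ with states $S$, truth assignments $\pi(s)$ to primitive propositions, local-state functions $L_i$, deterministic functions $\mathtt{A}^d_i(\psi,\ell,s,v_i)\in\{$''Yes'',''No'',''?''$\}$ (derandomized version of agent $i$'s knowledge algorithm $\mathtt{A}_i$), and a probability distribution $\nu$ on $V$ such that each answer set $\{v:\mathtt{A}^d_i(\psi,L_i(s),s,v_i)=a\}$ is nonempty iff it has positive $\nu$-probability. $(N,s,v)\models X_i\psi$ iff $\mathtt{A}^d_i(\psi,L_i(s),s,v_i)=$''Yes''; $\neg$ and $\Leftrightarrow$ are interpreted as usual; $N\models\chi$ means $(N,s,v)\models\chi$ for all $s\in S$, $v\in V$. $\mathtt{A}_i$ is $\phi$-complete if $\mathtt{A}^d_i(\phi,L_i(s),s,v_i)\in\{$''Yes'',''No''$\}$ for all $s,v$. $\mathtt{A}_i$ weakly respects negation if for all $\psi,\ell,s,v$: $\mathtt{A}^d_i(\neg\psi,\ell,s,v_i)$ is ''Yes'' when $\mathtt{A}^d_i(\psi,\ell,s,v_i)=$''No'', ''No'' when it is ''Yes'',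 ''?'' when it is ''?''; it strongly respects negation if $\mathtt{A}^d_i(\neg\psi,\ell,s,v_i)$ is ''Yes'' when $\mathtt{A}^d_i(\psi,\ell,s,v_i)\ne$''Yes'' and ''No'' when it is ''Yes''; it respects negation if it weakly or strongly respects negation. *)

From Stdlib Require Import Reals.
From mathcomp Require Import ssreflect ssrfun ssrbool eqtype ssrnat fintype.
Set Implicit Arguments.
Unset Strict Implicit.

Inductive form (n : nat) (Phi : Type) : Type :=
  | Prim of Phi
  | Neg of form n Phi
  | And of form n Phi & form n Phi
  | X of 'I_n & form n Phi.
Arguments Prim {n Phi}. Arguments Neg {n Phi}. Arguments And {n Phi}.
Arguments X {n Phi}.

Definition Imp n Phi (f g : form n Phi) : form n Phi := Neg (And f (Neg g)).
Definition Iff n Phi (f g : form n Phi) : form n Phi := And (Imp f g) (Imp g f).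

Inductive answer : Type := Yes | No | Unknown.

Definition coins := nat -> bool.
Definition derand (n : nat) := 'I_n -> coins.

Record PAKS (n : nat) (Phi Loc : Type) := {
  St : Type;
  pi : St -> Phi -> bool;
  L : 'I_n -> St -> Loc;
  Ad : 'I_n -> form n Phi -> Loc -> St -> coins -> answer;
  nu : (derand n -> Prop) -> R;
  nu_ge0 : forall A, (0 <= nu A)%R;
  nu_total : nu (fun _ => True) = 1%R;
  nu_answers : forall i psi s a,
    (exists v : derand n, Ad i psi (L i s) s (v i) = a) <->
    (0 < nu (fun v => Ad i psi (L i s) s (v i) = a))%R
}.
Arguments St {n Phi Loc}.
Arguments pi {n Phi Loc} _ _ _.
Arguments L {n Phi Loc} _ _ _.
Arguments Ad {n Phi Loc} _ _ _ _ _ _.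
Arguments nu {n Phi Loc} _ _.

Unset Implicit Arguments.
Fixpoint sat n Phi Loc (N : PAKS n Phi Loc) (s : St N) (v : derand n)
    (f : form n Phi) : Prop :=
  match f with
  | Prim p => pi N s p = true
  | Neg g => ~ sat n Phi Loc N s v g
  | And g h => sat n Phi Loc N s v g /\ sat n Phi Loc N s v h
  | X i g => Ad N i g (L N i s) s (v i) = Yes
  end.

Arguments sat {n Phi Loc} N s v f.
Definition valid n Phi Loc (N : PAKS n Phi Loc) (f : form n Phi) : Prop :=
  forall (s : St N) (v : derand n), sat N s v f.

Definition complete n Phi Loc (N : PAKS n Phi Loc) (i : 'I_n) (phi : form n Phi) :=
  forall (s : St N) (v : derand n),
    Ad N i phi (L N i s) s (v i) = Yes \/ Ad N i phi (L N i s) s (v i) = No.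

Definition weakly_respects_negation n Phi Loc (N : PAKS n Phi Loc) (i : 'I_n) :=
  forall (psi : form n Phi) (l : Loc) (s : St N) (c : coins),
    (Ad N i psi l s c = No -> Ad N i (Neg psi) l s c = Yes) /\
    (Ad N i psi l s c = Yes -> Ad N i (Neg psi) l s c = No) /\
    (Ad N i psi l s c = Unknown -> Ad N i (Neg psi) l s c = Unknown).

Definition strongly_respects_negation n Phi Loc (N : PAKS n Phi Loc) (i : 'I_n) :=
  forall (psi : form n Phi) (l : Loc) (s : St N) (c : coins),
    (Ad N i psi l s c <> Yes -> Ad N i (Neg psi) l s c = Yes) /\
    (Ad N i psi l s c = Yes -> Ad N i (Neg psi) l s c = No).

Arguments valid {n Phi Loc} N f.
Arguments complete {n Phi Loc} N i phi.
Arguments weakly_respects_negation {n Phi Loc} N i.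
Arguments strongly_respects_negation {n Phi Loc} N i.
Definition respects_negation n Phi Loc (N : PAKS n Phi Loc) (i : 'I_n) :=
  weakly_respects_negation N i \/ strongly_respects_negation N i.
Arguments respects_negation {n Phi Loc} N i.

From Stdlib Require Import Reals.
From mathcomp Require Import ssreflect ssrfun ssrbool eqtype ssrnat fintype.

(* On a formula the algorithm decides (answers "Yes" or "No"), both ways of
   respecting negation make the answer on its negation the opposite one, so
   "Yes" on phi is the same as not-"Yes" on ~phi. *)

Section RespectsNegation.

Context {n : nat} {Phi Loc : Type} {N : PAKS n Phi Loc} {i : 'I_n}.
Hypothesis respN : respects_negation N i.

Lemma respects_negation_Yes {psi l s c} :
  Ad N i psi l s c = Yes -> Ad N i (Neg psi) l s c = No.
Proof. by case: respN => H; have [_ H_Yes] := H psi l s c; [case: H_Yes | ]. Qed.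

Lemma respects_negation_No {psi l s c} :
  Ad N i psi l s c = No -> Ad N i (Neg psi) l s c = Yes.
Proof.
case: respN => H; case: (H psi l s c) => H_No _ E; first exact: H_No.
by apply: H_No; rewrite E.
Qed.

Lemma decided_Yes_iff_Neg_not_Yes {psi l s c} :
  Ad N i psi l s c = Yes \/ Ad N i psi l s c = No ->
  (Ad N i psi l s c = Yes <-> Ad N i (Neg psi) l s c <> Yes).
Proof.
case=> E; rewrite E.
- by rewrite (respects_negation_Yes E).
- by rewrite (respects_negation_No E).
Qed.

End RespectsNegation.

Lemma sat_Iff n Phi Loc (N : PAKS n Phi Loc) s v (f g : form n Phi) :
  (sat N s v f <-> sat N s v g) -> sat N s v (Iff f g).
Proof. by case=> fg gf /=; split=> -[x nx]; [exact: nx (fg x) | exact: nx (gf x)]. Qed.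

Theorem lemmaA2 (n : nat) (Phi Loc : Type) (N : PAKS n Phi Loc)
    (i : 'I_n) (phi : form n Phi) :
  complete N i phi -> respects_negation N i ->
  valid N (Iff (X i phi) (Neg (X i (Neg phi)))).
Proof.
move=> complete_phi respN s v; apply: sat_Iff => /=.
exact: (decided_Yes_iff_Neg_not_Yes respN (complete_phi s v)).
Qed.
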